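(* Consider the VP forward SDE $\mathrm{d}\boldsymbol{x}_t=-\tfrac12\beta(t)\boldsymbol{x}_t\,\mathrm{d}t+\sqrt{\beta(t)}\,\mathrm{d}\boldsymbol{w}_t$ with $0\le\beta(t)\le\beta_{\max}<\infty$, $\alpha(t)=\exp(-\int_0^t\beta(s)\,\mathrm{d}s)$, started from a clean random variable $\boldsymbol{x}_0$ supported on a compact set $\mathcal{X}$ with $\sup_{\boldsymbol{x}\in\mathcal{X}}\|\boldsymbol{x}\|_2\le B_x$; let $p_t$ denote the law of $\boldsymbol{x}_t$. Suppose the score network satisfies $\mathbb{E}_{\boldsymbol{x}\sim p_t}\big[\|\nabla_{\boldsymbol{x}}\log p_t(\boldsymbol{x})-\boldsymbol{s}_{\boldsymbol{\theta}}(\boldsymbol{x},t)\|_2^2\big]\le\epsilon_s(t)^2$ for all $t$. Let $\hat{\boldsymbol{x}}_{0|t}=\frac{1}{\sqrt{\alpha(t)}}\big(\boldsymbol{x}_t+(1-\alpha(t))\boldsymbol{s}_{\boldsymbol{\theta}}(\boldsymbol{x}_t,t)\big)$. Then for every $t\in[0,T]$, $$\mathbb{E}\|\hat{\boldsymbol{x}}_{0|t}\|^2\le K(t)<\infty,\qquad K(t)=\Big(B_x+\frac{1-\alpha(t)}{\sqrt{\alpha(t)}}\epsilon_s(t)\Big)^2,$$ where the expectation is over $\boldsymbol{x}_t\sim p_t$. *)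

From HB Require Import structures.
From mathcomp Require Import all_boot all_order all_algebra.
From mathcomp Require Import all_classical all_reals all_analysis.
Set Implicit Arguments. Unset Strict Implicit. Unset Printing Implicit Defensive.
Import Order.TTheory GRing.Theory Num.Theory.
Import numFieldNormedType.Exports.
Local Open Scope classical_set_scope.
Local Open Scope ring_scope.

Section defs.
Context {R : realType} {d : nat}.

Definition sqnorm2 (v : 'rV[R]_d) : R := \sum_(i < d) (v ord0 i) ^+ 2.
Definition norm2 (v : 'rV[R]_d) : R := Num.sqrt (sqnorm2 v).

Definition vp_alpha (beta : R -> R) (t : R) : R :=
  expR (- fine (\int[lebesgue_measure]_(s in `[0%R, t]) (beta s)%:E)%E).

(* the forward VP process at time t: x_t = sqrt(alpha) x_0 + sqrt(1-alpha) z,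
   the (exact) solution of the linear VP SDE *)
Definition vp_xt {T : Type} (a : R) (X0 Z : T -> 'rV[R]_d) (w : T) : 'rV[R]_d :=
  Num.sqrt a *: X0 w + Num.sqrt (1 - a) *: Z w.

(* Z is a standard Gaussian vector in R^d (i.i.d. N(0,1) coordinates)
   independent of X0: joint law on measurable rectangles *)
Definition std_gauss_indep {d0} {T : measurableType d0} (P : probability T R)
  (X0 Z : T -> 'rV[R]_d) : Prop :=
  forall A B : 'I_d -> set R,
    (forall i, measurable (A i)) -> (forall i, measurable (B i)) ->
    P ([set w | forall i, A i (X0 w ord0 i)] `&` [set w | forall i, B i (Z w ord0 i)])
    = (P [set w | forall i, A i (X0 w ord0 i)] * \prod_(i < d) normal_prob 0 1 (B i))%E.

(* density p_t(x) of x_t (Gaussian mixture over the law of x_0) *)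
Definition vp_density {d0} {T : measurableType d0} (P : probability T R)
  (a : R) (X0 : T -> 'rV[R]_d) (x : 'rV[R]_d) : R :=
  fine (\int[P]_w (\prod_(i < d)
          normal_pdf (Num.sqrt a * X0 w ord0 i) (Num.sqrt (1 - a)) (x ord0 i))%:E)%E.

Definition grad (f : 'rV[R]_d -> R) (x : 'rV[R]_d) : 'rV[R]_d :=
  \row_(i < d) derive f x (delta_mx ord0 i).

Definition score {d0} {T : measurableType d0} (P : probability T R)
  (a : R) (X0 : T -> 'rV[R]_d) : 'rV[R]_d -> 'rV[R]_d :=
  grad (fun y => ln (vp_density P a X0 y)).

End defs.

(* The density p_t is the Gaussian
   mixture E[likelihood x], and differentiating it under the integral sign gives
   Tweedie's formula score(x) = (sqrt a m(x) - x) / (1 - a), where the posterior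
   mean m(x) = E[x_0 | x_t = x] is a likelihood-weighted average of x_0, hence
   |m(x)| <= B_x by Cauchy-Schwarz. So x0hat = m(x_t) + c (s_theta - score) with
   c = (1 - a) / sqrt a, and Young's inequality
   |u + v|^2 <= (1 + l) |u|^2 + (1 + 1/l) |v|^2 integrates to
   E|x0hat|^2 <= (1 + l) B_x^2 + (1 + 1/l) c^2 eps^2 for every l > 0, whose
   infimum over l is (B_x + c eps)^2. *)

From HB Require Import structures.
From mathcomp Require Import all_boot all_order all_algebra.
From mathcomp Require Import all_classical all_reals all_analysis.
From mathcomp Require Import ring lra unstable measurable_realfun.
Import Order.TTheory GRing.Theory Num.Theory.
Import numFieldNormedType.Exports.
Local Open Scope classical_set_scope.
Local Open Scope ring_scope.

Lemma young_sqrrD {R : realFieldType} (u v l : R) : 0 < l ->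
  (u + v) ^+ 2 <= (1 + l) * u ^+ 2 + (1 + l^-1) * v ^+ 2.
Proof.
move=> l0; rewrite -subr_ge0.
have -> : (1 + l) * u ^+ 2 + (1 + l^-1) * v ^+ 2 - (u + v) ^+ 2 = (l * u - v) ^+ 2 / l.
  by field; rewrite gt_eqF.
by rewrite divr_ge0 ?sqr_ge0 ?ltW.
Qed.

Lemma le_sqrrD_of_young {R : rcfType} (X B K : R) : 0 <= B -> 0 <= K ->
  (forall l, 0 < l -> X <= (1 + l) * B ^+ 2 + (1 + l^-1) * K ^+ 2) ->
  X <= (B + K) ^+ 2.
Proof.
move=> B0 K0 HX.
have {}HX z : B + K < z -> X <= z ^+ 2.
  move=> BKz; pose e := (z - (B + K)) / 2.
  have e0 : 0 < e by rewrite divr_gt0 ?subr_gt0.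
  have p0 : 0 < B + e by rewrite ltr_wpDl.
  have q0 : 0 < K + e by rewrite ltr_wpDl.
  pose l := (K + e) / (B + e).
  have l0 : 0 < l by rewrite divr_gt0.
  apply: (le_trans (HX l l0)).
  (* at [(B + e, K + e)] and [l = (K + e) / (B + e)] the Young bound is exact *)
  have -> : z ^+ 2 = (1 + l) * (B + e) ^+ 2 + (1 + l^-1) * (K + e) ^+ 2.
    have -> : z = (B + e) + (K + e) by rewrite /e; field.
    by rewrite /l; field; rewrite !gt_eqF.
  have le_sq (y : R) : 0 <= y -> y ^+ 2 <= (y + e) ^+ 2 by move=> y0; nra.
  have l1_ge0 : 0 <= 1 + l by rewrite addr_ge0 // ltW.
  have lV1_ge0 : 0 <= 1 + l^-1 by rewrite addr_ge0 // invr_ge0 ltW.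
  by apply: lerD; apply: ler_wpM2l => //; apply: le_sq.
apply/ler_gtP => z BKz.
have z0 : 0 <= z by apply: ltW; apply: le_lt_trans BKz; rewrite sqr_ge0.
rewrite -(sqr_sqrtr z0); apply: HX.
have BK0 : 0 <= B + K by rewrite addr_ge0.
by rewrite -[B + K]ger0_norm // -sqrtr_sqr ltr_sqrt // (le_lt_trans _ BKz) ?sqr_ge0.
Qed.

Section measure_integrals.
Context {R : realType} {d : measure_display} {T : measurableType d}.
Variable mu : {measure set T -> \bar R}.
Implicit Types (f g : T -> R) (k : R).

(* No measurability is needed: the integral of a nonnegative function is a
   supremum over the simple functions below it. *)
Lemma ge0_le_integral_nonmeasurable (f g : T -> \bar R) :
  (forall x, 0 <= f x)%E -> (forall x, f x <= g x)%E ->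
  (\int[mu]_x f x <= \int[mu]_x g x)%E.
Proof.
move=> f0 fg; have g0 x : (0 <= g x)%E := le_trans (f0 x) (fg x).
rewrite !ge0_integralTE //; apply: ereal_sup_le => _ [h /= hf <-].
by exists h => //= x; exact: le_trans (hf x) (fg x).
Qed.

Lemma integrableZl_EFin k f :
  mu.-integrable setT (EFin \o f) ->
  mu.-integrable setT (EFin \o (fun x => k * f x)).
Proof.
move=> /(integrableZl measurableT k).
by apply: (eq_integrable measurableT) => x _; rewrite /= EFinM.
Qed.

Lemma integrableB_EFin f g :
  mu.-integrable setT (EFin \o f) -> mu.-integrable setT (EFin \o g) ->
  mu.-integrable setT (EFin \o (fun x => f x - g x)).
Proof.
move=> fi gi; have := integrableB measurableT fi gi.
by apply: (eq_integrable measurableT) => x _; rewrite /= EFinB.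
Qed.

Lemma integrable_sum_EFin (I : Type) (s : seq I) (F : I -> T -> R) :
  (forall i, mu.-integrable setT (EFin \o F i)) ->
  mu.-integrable setT (EFin \o (fun x => \sum_(i <- s) F i x)).
Proof.
move=> Fi; have := integrable_sum measurableT s (P := xpredT) (fun i _ => Fi i).
by apply: (eq_integrable measurableT) => x _; rewrite /= sumEFin.
Qed.

Lemma Rintegral_sum (I : Type) (s : seq I) (F : I -> T -> R) :
  (forall i, mu.-integrable setT (EFin \o F i)) ->
  \int[mu]_x (\sum_(i <- s) F i x) = \sum_(i <- s) \int[mu]_x F i x.
Proof.
move=> Fi; elim: s => [|j s IH].
  by under eq_Rintegral do rewrite big_nil; rewrite big_nil Rintegral_cst // mul0r.
under eq_Rintegral do rewrite big_cons.
by rewrite big_cons RintegralD // ?IH //; exact: integrable_sum_EFin.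
Qed.

Lemma weighted_mean_sqr_le (W f : T -> R) :
  (forall x, 0 <= W x) -> 0 < \int[mu]_x W x ->
  mu.-integrable setT (EFin \o W) ->
  mu.-integrable setT (EFin \o (fun x => f x * W x)) ->
  mu.-integrable setT (EFin \o (fun x => f x ^+ 2 * W x)) ->
  (\int[mu]_x (f x * W x) / \int[mu]_x W x) ^+ 2 * \int[mu]_x W x <=
  \int[mu]_x (f x ^+ 2 * W x).
Proof.
move=> W0 Z0 iW ifW if2W; set Z := \int[mu]_x W x; set m := _ / Z.
have mZ : \int[mu]_x (f x * W x) = m * Z by rewrite /m divfK ?gt_eqF.
have : 0 <= \int[mu]_x ((f x - m) ^+ 2 * W x).
  by apply: Rintegral_ge0 => x _; rewrite mulr_ge0 ?sqr_ge0.
have -> : \int[mu]_x ((f x - m) ^+ 2 * W x) =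
    \int[mu]_x (f x ^+ 2 * W x - (2 * m) * (f x * W x) + m ^+ 2 * W x).
  by apply: eq_Rintegral => x _; ring.
rewrite RintegralD ?RintegralB ?RintegralZl //; last 3 first.
- exact: integrableZl_EFin.
- by apply: integrableB_EFin => //; exact: integrableZl_EFin.
- exact: integrableZl_EFin.
by rewrite -/Z mZ; lra.
Qed.

End measure_integrals.

Section probability_integrals.
Context {R : realType} {d : measure_display} {T : measurableType d}.
Variable P : probability T R.

Lemma Rintegral_cst_probability (c : R) : \int[P]_x c = c.
Proof.
have P1 : (P : {measure set T -> \bar R}) setT = 1%E by exact: probability_setT.
by rewrite Rintegral_cst // P1 mulr1.
Qed.

Lemma bounded_integrable (f : T -> R) (M : R) :
  measurable_fun setT f -> (forall x, `|f x| <= M) ->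
  P.-integrable setT (EFin \o f).
Proof.
move=> mf fM; apply: measurable_bounded_integrable => //.
  by apply: le_lt_trans (probability_le1 P _) _; rewrite ?ltry.
by exists M; split; [rewrite num_real | move=> y My x _; exact: le_trans (fM x) (ltW My)].
Qed.

Lemma ge0_integral_le_cst (f : T -> R) (M : R) :
  (forall x, 0 <= f x) -> (forall x, f x <= M) -> (\int[P]_x (f x)%:E <= M%:E)%E.
Proof.
move=> f0 fM; have P1 : (P : {measure set T -> \bar R}) setT = 1%E.
  exact: probability_setT.
apply: (@le_trans _ _ (\int[P]_x M%:E)%E); last by rewrite integral_cst // P1 mule1.
by apply: ge0_le_integral_nonmeasurable => x; rewrite lee_fin.
Qed.

(* [G] need not be measurable, so we integrate the measurable minorant
   [Y' = max (Y - A) 0 / k] of [G] instead. *)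
Lemma le_integral_affine (Y G : T -> R) (A k E : R) :
  measurable_fun setT Y -> (forall x, 0 <= Y x) -> (forall x, 0 <= G x) ->
  0 <= A -> 0 < k -> (forall x, Y x <= A + k * G x) ->
  (\int[P]_x (G x)%:E <= E%:E)%E -> (\int[P]_x (Y x)%:E <= (A + k * E)%:E)%E.
Proof.
move=> mY Y0 G0 A0 k0 YG IG.
pose Y' x := Order.max (Y x - A) 0 / k.
have Y'0 x : 0 <= Y' x by rewrite divr_ge0 ?(ltW k0) // le_max lexx orbT.
have mY' : measurable_fun setT Y'.
  apply: measurable_funM => //; apply: measurable_maxr => //.
  exact: measurable_funB.
have Y'G x : Y' x <= G x.
  by rewrite ler_pdivrMr // ge_max lerBlDl mulrC YG mulr_ge0 // ltW.
have YY' x : ((Y x)%:E <= A%:E + k%:E * (Y' x)%:E)%E.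
  by rewrite -EFinM -EFinD lee_fin mulrCA divff ?gt_eqF // mulr1 -lerBlDl le_max lexx.
have IY : (\int[P]_x (Y x)%:E <= \int[P]_x (A%:E + k%:E * (Y' x)%:E))%E.
  apply: ge0_le_integral => //.
  - by move=> x _; rewrite lee_fin.
  - exact/measurable_EFinP.
  - apply: emeasurable_funD => //; apply: emeasurable_funM => //.
    exact/measurable_EFinP.
apply: le_trans IY _.
rewrite ge0_integralD //; last 2 first.
- by move=> x _; apply: mule_ge0; rewrite lee_fin // ltW.
- have mkY' : measurable_fun setT (EFin \o Y') by exact/measurable_EFinP.
  exact: (@emeasurable_funM _ _ _ _ (cst k%:E) _ (measurable_cst _) mkY').
have P1 : (P : {measure set T -> \bar R}) setT = 1%E by exact: probability_setT.
rewrite integral_cst // P1 mule1 ge0_integralZl_EFin //; last 3 first.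
- by move=> x _; rewrite lee_fin.
- exact/measurable_EFinP.
- exact: ltW.
rewrite EFinD EFinM leeD2l // lee_pmul2l ?lte_fin //.
apply: le_trans IG.
by apply: ge0_le_integral_nonmeasurable => x; rewrite lee_fin ?Y'0 ?Y'G.
Qed.

End probability_integrals.

Section normal_pdf.
Context {R : realType}.
Implicit Types m s x : R.

Lemma normal_pdf_expR m s x : s != 0 ->
  normal_pdf m s x = normal_peak s * expR (- (x - m) ^+ 2 / (s ^+ 2 *+ 2)).
Proof. by move=> s0; rewrite normal_pdfE. Qed.

Lemma normal_pdfC m s x : s != 0 -> normal_pdf m s x = normal_pdf x s m.
Proof. by move=> s0; rewrite !normal_pdf_expR // -sqrrN opprB. Qed.

Lemma normal_pdf_lb m s x B : s != 0 -> `|m| <= B ->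
  normal_peak s * expR (- (`|x| + B) ^+ 2 / (s ^+ 2 *+ 2)) <= normal_pdf m s x.
Proof.
move=> s0 mB; rewrite normal_pdf_expR // ler_pM2l ?normal_peak_gt0 //.
rewrite ler_expR !mulNr lerN2 ler_pM2r ?invr_gt0 ?pmulrn_lgt0 ?exprn_even_gt0 //.
rewrite -real_normK ?num_real // lerXn2r ?nnegrE ?addr_ge0 ?(le_trans _ mB) //.
by rewrite (le_trans (ler_normB _ _)) // lerD2l.
Qed.

Lemma is_derive_normal_pdf m s x : s != 0 ->
  is_derive x 1 (normal_pdf m s) ((m - x) / s ^+ 2 * normal_pdf m s x).
Proof.
move=> s0; pose k := - (s ^+ 2 *+ 2)^-1.
have -> : normal_pdf m s = normal_peak s \*: (expR \o (k \*: (center m ^+ 2))).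
  apply/funext => y; rewrite normal_pdf_expR //=.
  have -> : (center m ^+ 2) y = (y - m) ^+ 2 by [].
  by rewrite /k /GRing.scale /=; congr (_ * expR _); ring.
apply: is_derive_eq (is_deriveZ (normal_peak s) (is_derive1_comp
  (is_derive_expR _) (is_deriveZ k (is_deriveX 2 (is_derive_shift x 1 (- m)))))) _.
by rewrite /k /GRing.scale /= expr1 mulr1 /GRing.scale /=; field.
Qed.

End normal_pdf.

Lemma sqnorm2_ge0 {R : realType} {n : nat} (v : 'rV[R]_n) : 0 <= sqnorm2 v.
Proof. by apply: sumr_ge0 => i _; exact: sqr_ge0. Qed.

Lemma measurable_sqnorm2 {R : realType} {n : nat} {d : measure_display}
    {T : measurableType d} (V : T -> 'rV[R]_n) :
  (forall i, measurable_fun setT (fun w => V w ord0 i)) ->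
  measurable_fun setT (fun w => sqnorm2 (V w)).
Proof. by move=> mV; apply: measurable_sum => i; exact: measurable_funX. Qed.

Lemma derive_along {R : numFieldType} (V W : normedModType R) (f : V -> W)
    (a v : V) :
  derive f a v = derive1 (fun h => f (h *: v + a)) 0.
Proof.
rewrite /derive /derive1; congr (lim (_ @ 0^')); apply/funext => h /=.
by rewrite addr0 scale0r add0r.
Qed.

Section gaussian_mixture_score.
Context {R : realType} {n : nat} {d0 : measure_display} {Omega : measurableType d0}.
Variables (P : probability Omega R) (X0 : Omega -> 'rV[R]_n) (a Bx : R).
Hypotheses (a_gt0 : 0 < a) (a_lt1 : a < 1).
Hypothesis mX0 : forall i, measurable_fun setT (fun w => X0 w ord0 i).
Hypothesis X0_le : forall w, norm2 (X0 w) <= Bx.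
Implicit Types (x : 'rV[R]_n) (i : 'I_n) (w : Omega) (h : R).

Let Bx_ge0 : 0 <= Bx.
Proof.
have [w _] : [set: Omega] !=set0.
  apply/set0P/negP => /eqP Omega0; have := probability_setT P.
  by rewrite Omega0 measure0 => /eqP; rewrite eq_sym onee_eq0.
exact: le_trans (sqrtr_ge0 _) (X0_le w).
Qed.

Let sigma := Num.sqrt (1 - a).

Let sigma_neq0 : sigma != 0. Proof. by rewrite gt_eqF // sqrtr_gt0 subr_gt0. Qed.

Let sigma_sqr : sigma ^+ 2 = 1 - a. Proof. by rewrite sqr_sqrtr // subr_ge0 ltW. Qed.

Lemma sqnorm2_X0_le w : sqnorm2 (X0 w) <= Bx ^+ 2.
Proof.
by rewrite -(sqr_sqrtr (sqnorm2_ge0 _)) lerXn2r ?nnegrE ?sqrtr_ge0 ?X0_le.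
Qed.

Lemma X0_coord_le w i : `|X0 w ord0 i| <= Bx.
Proof.
apply: le_trans (X0_le w); rewrite -sqrtr_sqr ler_sqrt ?sqnorm2_ge0 //.
by rewrite /sqnorm2 (bigD1 i) //= lerDl sumr_ge0 // => j _; rewrite sqr_ge0.
Qed.

Lemma scaled_X0_coord_le w i : `|Num.sqrt a * X0 w ord0 i| <= Bx.
Proof.
rewrite normrM ger0_norm ?sqrtr_ge0 // (le_trans _ (X0_coord_le w i)) // ler_piMl //.
by rewrite -sqrtr1 ler_sqrt // ltW.
Qed.

Definition likelihood (x : 'rV[R]_n) (w : Omega) : R :=
  \prod_(j < n) normal_pdf (Num.sqrt a * X0 w ord0 j) sigma (x ord0 j).

Lemma vp_densityE x : vp_density P a X0 x = \int[P]_w likelihood x w.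
Proof. by []. Qed.

Lemma likelihood_ge0 x w : 0 <= likelihood x w.
Proof. by apply: prodr_ge0 => j _; exact: normal_pdf_ge0. Qed.

Lemma likelihood_le x w : likelihood x w <= normal_peak sigma ^+ n.
Proof.
rewrite -[n in _ ^+ n]card_ord -prodr_const; apply: ler_prod => j _.
by rewrite normal_pdf_ge0 normal_pdf_ub.
Qed.

Lemma measurable_likelihood x : measurable_fun setT (likelihood x).
Proof.
apply: measurable_prod => j _.
under eq_fun do rewrite normal_pdfC //.
by apply: measurableT_comp (measurable_normal_pdf _ _) _; exact: measurable_funM.
Qed.

Lemma integrable_likelihood x : P.-integrable setT (EFin \o likelihood x).
Proof.
apply: (bounded_integrable _ _ (normal_peak sigma ^+ n) (measurable_likelihood x)) => w.
by rewrite ger0_norm ?likelihood_ge0 ?likelihood_le.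
Qed.

Lemma integrable_mul_likelihood x (f : Omega -> R) M :
  measurable_fun setT f -> (forall w, `|f w| <= M) ->
  P.-integrable setT (EFin \o (fun w => f w * likelihood x w)).
Proof.
move=> mf fM; apply: (bounded_integrable _ _ (M * normal_peak sigma ^+ n)
  (measurable_funM mf (measurable_likelihood x))) => w.
rewrite normrM (ger0_norm (likelihood_ge0 x w)).
by rewrite ler_pM ?likelihood_ge0 ?likelihood_le.
Qed.

Lemma vp_density_gt0 x : 0 < vp_density P a X0 x.
Proof.
pose L := \prod_(j < n)
  (normal_peak sigma * expR (- (`|x ord0 j| + Bx) ^+ 2 / (sigma ^+ 2 *+ 2))).
have L_gt0 : 0 < L.
  by apply: prodr_gt0 => j _; rewrite mulr_gt0 ?expR_gt0 ?normal_peak_gt0.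
apply: (lt_le_trans L_gt0); rewrite vp_densityE.
rewrite -[L in L <= _](Rintegral_cst_probability P).
apply: le_Rintegral => //.
- exact: (bounded_integrable _ _ `|L| (measurable_cst L) (fun=> lexx _)).
- exact: integrable_likelihood.
move=> w _; apply: ler_prod => j _; rewrite mulr_ge0 ?expR_ge0 ?normal_peak_ge0 //=.
exact: normal_pdf_lb sigma_neq0 (scaled_X0_coord_le w j).
Qed.

Definition posterior_mean (x : 'rV[R]_n) (i : 'I_n) : R :=
  \int[P]_w (X0 w ord0 i * likelihood x w) / vp_density P a X0 x.

Lemma likelihood_shift x i h w :
  likelihood (h *: delta_mx ord0 i + x) w =
  normal_pdf (Num.sqrt a * X0 w ord0 i) sigma (h + x ord0 i) *
  \prod_(j < n | j != i) normal_pdf (Num.sqrt a * X0 w ord0 j) sigma (x ord0 j).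
Proof.
rewrite /likelihood (bigD1 i) //= !mxE !eqxx mulr1; congr (_ * _).
by apply: eq_bigr => j ji; rewrite !mxE eqxx (negbTE ji) mulr0 add0r.
Qed.

Lemma is_derive_likelihood_shift x i w h :
  is_derive h 1 (fun h => likelihood (h *: delta_mx ord0 i + x) w)
    ((Num.sqrt a * X0 w ord0 i - (h + x ord0 i)) / (1 - a) *
     likelihood (h *: delta_mx ord0 i + x) w).
Proof.
pose C := \prod_(j < n | j != i)
  normal_pdf (Num.sqrt a * X0 w ord0 j) sigma (x ord0 j).
have -> : (fun h => likelihood (h *: delta_mx ord0 i + x) w) =
    (normal_pdf (Num.sqrt a * X0 w ord0 i) sigma \o shift (x ord0 i)) * cst C.
  by apply/funext => h'; rewrite likelihood_shift.
apply: is_derive_eq (is_deriveM (is_derive1_comp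
  (is_derive_normal_pdf _ _ _ sigma_neq0) (is_derive_shift h 1 (x ord0 i)))
  (is_derive_cst C h 1)) _.
by rewrite likelihood_shift -/C -sigma_sqr /GRing.scale /=; ring.
Qed.

Lemma norm_derive_likelihood_shift_le x i w h : `|h| < 1 ->
  `|(Num.sqrt a * X0 w ord0 i - (h + x ord0 i)) / (1 - a) *
    likelihood (h *: delta_mx ord0 i + x) w| <=
  (`|x ord0 i| + 1 + Bx) / (1 - a) * normal_peak sigma ^+ n.
Proof.
move=> h1; rewrite normrM (ger0_norm (likelihood_ge0 _ _)).
apply: ler_pM; rewrite ?normr_ge0 ?likelihood_ge0 ?likelihood_le //.
have a1 : 0 <= (1 - a)^-1 by rewrite invr_ge0 subr_ge0 ltW.
rewrite normrM (ger0_norm a1) ler_wpM2r //.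
apply: le_trans (ler_normB _ _) _.
rewrite [leRHS]addrC lerD ?scaled_X0_coord_le // (le_trans (ler_normD _ _)) //.
by rewrite addrC lerD2l ltW.
Qed.

Lemma is_derive_vp_density_shift x i :
  is_derive (0 : R) 1 (fun h => vp_density P a X0 (h *: delta_mx ord0 i + x))
    ((Num.sqrt a * \int[P]_w (X0 w ord0 i * likelihood x w) -
      x ord0 i * vp_density P a X0 x) / (1 - a)).
Proof.
pose f h w := likelihood (h *: delta_mx ord0 i + x) w.
have f0 w : f 0 w = likelihood x w by rewrite /f scale0r add0r.
have d1f h w : partial1of2 f h w =
    (Num.sqrt a * X0 w ord0 i - (h + x ord0 i)) / (1 - a) * f h w.
  by rewrite partial1of2E; have [_ ->] := is_derive_likelihood_shift x i w h.
pose G := (`|x ord0 i| + 1 + Bx) / (1 - a) * normal_peak sigma ^+ n.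
have I0 : `]-1, 1[%classic (0 : R) by rewrite /= in_itv /= ltrN10 ltr01.
have intf h : `]-1, 1[%classic h -> P.-integrable setT (EFin \o f h).
  by move=> _; exact: integrable_likelihood.
have derf h w : `]-1, 1[%classic h -> setT w -> derivable (f^~ w) h 1.
  by move=> _ _; have [] := is_derive_likelihood_shift x i w h.
have G_ge0 w : 0 <= (fun=> G) w.
  apply: mulr_ge0; last exact: exprn_ge0 (normal_peak_ge0 _).
  by rewrite divr_ge0 ?subr_ge0 ?(ltW a_lt1) // !addr_ge0.
have intG : P.-integrable setT (EFin \o fun=> G).
  exact: (bounded_integrable _ _ `|G| (measurable_cst G) (fun=> lexx _)).
have G_ub h w : `]-1, 1[%classic h -> setT w -> `|partial1of2 f h w| <= (fun=> G) w.
  rewrite /= in_itv /= => /andP[h1 h2] _; rewrite d1f.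
  by apply: norm_derive_likelihood_shift_le; rewrite ltr_norml h1 h2.
apply: DeriveDef.
  exact: (derivable_under_integral measurableT I0 intf derf G_ge0 intG G_ub).
rewrite -derive1E (differentiation_under_integral measurableT I0 intf derf G_ge0 intG G_ub).
have a1 : 1 - a != 0 by rewrite subr_eq0 gt_eqF.
have mX0i : P.-integrable setT (EFin \o (fun w => X0 w ord0 i * likelihood x w)).
  exact: integrable_mul_likelihood (mX0 i) (X0_coord_le ^~ i).
have -> : \int[P]_w partial1of2 f 0 w = \int[P]_w
    (Num.sqrt a / (1 - a) * (X0 w ord0 i * likelihood x w) -
     x ord0 i / (1 - a) * likelihood x w).
  by apply: eq_Rintegral => w _; rewrite d1f f0 add0r; field.
rewrite RintegralB ?RintegralZl ?integrable_likelihood //; last 2 first.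
- exact: integrableZl_EFin.
- exact/integrableZl_EFin/integrable_likelihood.
by rewrite vp_densityE; field.
Qed.

Lemma score_posterior_mean x i :
  score P a X0 x ord0 i = (Num.sqrt a * posterior_mean x i - x ord0 i) / (1 - a).
Proof.
pose F h := vp_density P a X0 (h *: delta_mx ord0 i + x).
have F0 : F 0 = vp_density P a X0 x by rewrite /F scale0r add0r.
have F0_gt0 : 0 < F 0 by rewrite F0 vp_density_gt0.
have lnF := is_derive1_comp (is_derive1_ln F0_gt0) (is_derive_vp_density_shift x i).
rewrite /score /grad mxE derive_along derive1E derive_val.
have a1 : 1 - a != 0 by rewrite subr_eq0 gt_eqF.
have p0 : vp_density P a X0 x != 0 by rewrite gt_eqF ?vp_density_gt0.
by rewrite F0 /posterior_mean; field; rewrite a1 p0.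
Qed.

Lemma posterior_mean_sqnorm_le x : \sum_(i < n) posterior_mean x i ^+ 2 <= Bx ^+ 2.
Proof.
have p_gt0 := vp_density_gt0 x.
have int_X0sqr i :
    P.-integrable setT (EFin \o (fun w => X0 w ord0 i ^+ 2 * likelihood x w)).
  apply: (integrable_mul_likelihood x _ (Bx ^+ 2) (measurable_funX _ (mX0 i))) => w.
  by rewrite normrX lerXn2r ?nnegrE ?X0_coord_le.
rewrite -(ler_pM2r p_gt0) mulr_suml.
apply: (@le_trans _ _ (\sum_(i < n) \int[P]_w (X0 w ord0 i ^+ 2 * likelihood x w))).
  apply: ler_sum => i _; rewrite /posterior_mean vp_densityE.
  apply: weighted_mean_sqr_le => //; rewrite -?vp_densityE //.
  - exact: likelihood_ge0.
  - exact: integrable_likelihood.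
  - exact: integrable_mul_likelihood (mX0 i) (X0_coord_le ^~ i).
rewrite -Rintegral_sum // vp_densityE.
rewrite -(RintegralZl _ measurableT (integrable_likelihood x)).
apply: le_Rintegral => //.
- exact: integrable_sum_EFin.
- exact/integrableZl_EFin/integrable_likelihood.
by move=> w _; rewrite -mulr_suml ler_wpM2r ?likelihood_ge0 ?sqnorm2_X0_le.
Qed.

Lemma denoiser_posterior_mean y (s : 'rV[R]_n) i :
  ((Num.sqrt a)^-1 *: (y + (1 - a) *: s)) ord0 i =
  posterior_mean y i + (1 - a) / Num.sqrt a * (s ord0 i - score P a X0 y ord0 i).
Proof.
have a1 : 1 - a != 0 by rewrite subr_eq0 gt_eqF.
have sa0 : Num.sqrt a != 0 by rewrite gt_eqF // sqrtr_gt0.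
by rewrite score_posterior_mean !mxE; field; rewrite a1 sa0.
Qed.

Lemma sqnorm2_denoiser_le y (s : 'rV[R]_n) l : 0 < l ->
  sqnorm2 ((Num.sqrt a)^-1 *: (y + (1 - a) *: s)) <=
  (1 + l) * Bx ^+ 2 +
  (1 + l^-1) * ((1 - a) / Num.sqrt a) ^+ 2 * sqnorm2 (score P a X0 y - s).
Proof.
move=> l0; rewrite /sqnorm2; under eq_bigr do rewrite denoiser_posterior_mean.
move: ((1 - a) / Num.sqrt a) (score P a X0 y) => c g.
apply: (@le_trans _ _ (\sum_(i < n) ((1 + l) * posterior_mean y i ^+ 2 +
    (1 + l^-1) * (c * (s ord0 i - g ord0 i)) ^+ 2))).
  by apply: ler_sum => i _; exact: young_sqrrD.
rewrite -mulrA; have -> : c ^+ 2 * \sum_(i < n) (g - s) ord0 i ^+ 2 =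
    \sum_(i < n) (c * (s ord0 i - g ord0 i)) ^+ 2.
  rewrite mulr_sumr; apply: eq_bigr => i _.
  by rewrite !mxE exprMn; congr (_ * _); rewrite -sqrrN opprB.
rewrite big_split /= -!mulr_sumr lerD2r ler_wpM2l ?posterior_mean_sqnorm_le //.
by rewrite addr_ge0 // ltW.
Qed.

Lemma denoiser_risk_le (Y S : Omega -> 'rV[R]_n) (eps : R) :
  (forall i, measurable_fun setT (fun w => Y w ord0 i)) ->
  (forall i, measurable_fun setT (fun w => S w ord0 i)) ->
  0 <= eps ->
  (\int[P]_w (sqnorm2 (score P a X0 (Y w) - S w))%:E <= (eps ^+ 2)%:E)%E ->
  (\int[P]_w (sqnorm2 ((Num.sqrt a)^-1 *: (Y w + (1 - a) *: S w)))%:E <=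
   ((Bx + (1 - a) / Num.sqrt a * eps) ^+ 2)%:E)%E.
Proof.
move=> mY mS eps0 score_err; set c := (1 - a) / Num.sqrt a.
have c0 : 0 < c by rewrite divr_gt0 ?subr_gt0 ?sqrtr_gt0.
pose D w := sqnorm2 ((Num.sqrt a)^-1 *: (Y w + (1 - a) *: S w)).
have mD : measurable_fun setT D.
  apply: measurable_sqnorm2 => i; under eq_fun do rewrite !mxE.
  apply: measurable_funM => //; apply: measurable_funD => //.
  exact: measurable_funM.
have risk_split l : 0 < l ->
    (\int[P]_w (D w)%:E <= ((1 + l) * Bx ^+ 2 + (1 + l^-1) * (c * eps) ^+ 2)%:E)%E.
  move=> l0; have -> : (1 + l) * Bx ^+ 2 + (1 + l^-1) * (c * eps) ^+ 2 =
      (1 + l) * Bx ^+ 2 + ((1 + l^-1) * c ^+ 2) * eps ^+ 2 by ring.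
  apply: (le_integral_affine P D _ _ _ _ mD _ _ _ _ _ score_err).
  - by move=> w; exact: sqnorm2_ge0.
  - by move=> w; exact: sqnorm2_ge0.
  - by rewrite mulr_ge0 ?sqr_ge0 // addr_ge0 // ltW.
  - by rewrite mulr_gt0 ?exprn_gt0 // addr_gt0 // invr_gt0.
  - by move=> w; exact: sqnorm2_denoiser_le.
have D_fin : (\int[P]_w (D w)%:E)%E \is a fin_num.
  rewrite ge0_fin_numE ?(le_lt_trans (risk_split 1 ltr01)) ?ltry //.
  by apply: integral_ge0 => w _; rewrite lee_fin sqnorm2_ge0.
rewrite -(fineK D_fin) lee_fin; apply: le_sqrrD_of_young => // [|l l0].
  by rewrite mulr_ge0 // ltW.
by rewrite -lee_fin fineK // risk_split.
Qed.

End gaussian_mixture_score.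

Lemma vp_alpha_gt0 {R : realType} (beta : R -> R) t : 0 < vp_alpha beta t.
Proof. exact: expR_gt0. Qed.

Lemma vp_alpha_le1 {R : realType} (beta : R -> R) t :
  (forall s, 0 <= beta s) -> vp_alpha beta t <= 1.
Proof.
move=> beta0; rewrite -expR0 ler_expR oppr_le0 fine_ge0 //.
by apply: integral_ge0 => s _; rewrite lee_fin.
Qed.

Theorem lemmaD10 (R : realType) (n : nat)
  (d0 : measure_display) (Omega : measurableType d0) (P : probability Omega R)
  (beta : R -> R) (beta_max : R) (T : R)
  (X0 Z : Omega -> 'rV[R]_n) (Xset : set 'rV[R]_n) (Bx : R)
  (s_theta : 'rV[R]_n -> R -> 'rV[R]_n) (eps_s : R -> R) :
  measurable_fun [set: R] beta ->
  (forall t, 0 <= beta t <= beta_max) ->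
  (forall i, measurable_fun [set: Omega] (fun w => X0 w ord0 i)) ->
  (forall i, measurable_fun [set: Omega] (fun w => Z w ord0 i)) ->
  std_gauss_indep P X0 Z ->
  compact Xset ->
  (forall w, Xset (X0 w)) ->
  (forall x, Xset x -> norm2 x <= Bx) ->
  (forall t i, measurable_fun [set: Omega]
     (fun w => s_theta (vp_xt (vp_alpha beta t) X0 Z w) t ord0 i)) ->
  (forall t, 0 <= eps_s t) ->
  (forall t, 0 <= t ->
     (\int[P]_w (sqnorm2 (score P (vp_alpha beta t) X0
                            (vp_xt (vp_alpha beta t) X0 Z w)
                          - s_theta (vp_xt (vp_alpha beta t) X0 Z w) t))%:E
      <= ((eps_s t) ^+ 2)%:E)%E) ->
  forall t, 0 <= t <= T ->
    let a := vp_alpha beta t in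
    let x0hat := fun w =>
      (Num.sqrt a)^-1 *: (vp_xt a X0 Z w + (1 - a) *: s_theta (vp_xt a X0 Z w) t) in
    (\int[P]_w (sqnorm2 (x0hat w))%:E
       <= ((Bx + (1 - a) / Num.sqrt a * eps_s t) ^+ 2)%:E)%E.
Proof.
move=> _ beta_bnd mX0 mZ _ _ X0_in Xset_le m_s eps_ge0 score_err t /andP[t_ge0 _].
cbv zeta; set a := vp_alpha beta t.
have X0_le w : norm2 (X0 w) <= Bx := Xset_le _ (X0_in w).
(* At [a = 1] the Gaussian kernel degenerates ([normal_pdf m 0] is an
   indicator), but then [x0hat = X0]. *)
have /orP[/eqP a1|a_lt1] : (a == 1) || (a < 1).
  by rewrite -le_eqVlt vp_alpha_le1 // => s; case/andP: (beta_bnd s).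
  rewrite a1 subrr mul0r mul0r addr0.
  apply: ge0_integral_le_cst => w; first exact: sqnorm2_ge0.
  rewrite /vp_xt subrr sqrtr0 sqrtr1 invr1 !scale0r !scale1r !addr0.
  exact: sqnorm2_X0_le.
apply: denoiser_risk_le => //.
- exact: vp_alpha_gt0.
- move=> i; under eq_fun do rewrite !mxE.
  by apply: measurable_funD; apply: measurable_funM.
- exact: m_s.
- exact: score_err.
Qed.
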